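(* Let $\mathbb{K}$ be an algebraically closed field of characteristic $p\geq 3$ and $L$ a nilpotent Lie superalgebra over $\mathbb{K}$ of total dimension $3$. Then $L$ is isomorphic to one of the following (basis listed as even $|$ odd, only nonzero brackets listed up to super antisymmetry): $\mathrm{sdim}=(0|3)$: $L^1_{0|3}=\langle\,|e_1,e_2,e_3\rangle$ abelian. $\mathrm{sdim}=(1|2)$, basis $e_1|e_2,e_3$: $L^1_{1|2}$ abelian; $L^2_{1|2}$: $[e_2,e_3]=e_1$; $L^3_{1|2}$: $[e_1,e_2]=e_3$; $L^4_{1|2}$: $[e_3,e_3]=e_1$. $\mathrm{sdim}=(2|1)$, basis $e_1,e_2|e_3$: $L^1_{2|1}$ abelian; $L^2_{2|1}$: $[e_3,e_3]=e_2$. $\mathrm{sdim}=(3|0)$, basis $e_1,e_2,e_3$: $L^1_{3|0}$ abelian; $L^2_{3|0}$: $[e_1,e_2]=e_3$.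
   Context: A Lie superalgebra $L=L_{\bar0}\oplus L_{\bar1}$ over a field of characteristic $p>2$ has a super antisymmetric bracket satisfying the super Jacobi identity and, additionally, $[x,[x,x]]=0$ for all $x\in L_{\bar1}$. $\mathrm{sdim}(L)=(\dim L_{\bar0}|\dim L_{\bar1})$. $L$ is nilpotent if the series $C^0(L)=L$, $C^{k+1}(L)=[C^k(L),L]$ reaches $0$. *)

From HB Require Import structures.
From mathcomp Require Import all_boot all_order all_algebra.
Set Implicit Arguments. Unset Strict Implicit. Unset Printing Implicit Defensive.
Import GRing.Theory.
Local Open Scope ring_scope.

(* Parities are booleans: false = even (0), true = odd (1). *)

Section LieSuper.
Variables (K : fieldType) (V : vectType K).

Definition homog (L0 L1 : {vspace V}) (b : bool) (x : V) : bool :=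
  x \in (if b then L1 else L0).

Definition is_lie_superalgebra (L0 L1 : {vspace V}) (br : V -> V -> V) : Prop :=
  ((L0 + L1)%VS = fullv /\ directv (L0 + L1)%VS) /\
      (forall (a : K) (x y z : V), br (a *: x + y) z = a *: br x z + br y z) /\
      (forall (a : K) (x y z : V), br x (a *: y + z) = a *: br x y + br x z) /\
      (forall (a b : bool) (x y : V), homog L0 L1 a x -> homog L0 L1 b y ->
          homog L0 L1 (a (+) b) (br x y)) /\
      (forall (a b : bool) (x y : V), homog L0 L1 a x -> homog L0 L1 b y ->
          br x y = - ((-1) ^+ (a && b) *: br y x)) /\
      (forall (a b c : bool) (x y z : V), homog L0 L1 a x -> homog L0 L1 b y ->
          homog L0 L1 c z ->
          br x (br y z) = br (br x y) z + (-1) ^+ (a && b) *: br y (br x z)) /\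
      (forall x : V, x \in L1 -> br x (br x x) = 0).

Fixpoint lcs (br : V -> V -> V) (k : nat) : {vspace V} :=
  match k with
  | 0 => fullv
  | k'.+1 => <<[seq br x y | x <- vbasis (lcs br k'), y <- vbasis (fullv : {vspace V})]>>%VS
  end.

Definition nilpotent (br : V -> V -> V) : Prop := exists k, lcs br k = 0%VS.

End LieSuper.

(* Model superalgebras on K^3 = 'rV[K]_3 with basis e_1,e_2,e_3
   (0-indexed here as e 0, e 1, e 2); the first m basis vectors are even,
   the remaining ones are odd. *)
Section Models.
Variable K : fieldType.

Definition e (k : nat) : 'rV[K]_3 := delta_mx 0 (inord k).

Definition model_even (m : nat) : {vspace 'rV[K]_3} :=
  <<[seq delta_mx ord0 i | i <- [seq i <- enum 'I_3 | (nat_of_ord i < m)%N]]>>%VS.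
Definition model_odd (m : nat) : {vspace 'rV[K]_3} :=
  <<[seq delta_mx ord0 i | i <- [seq i <- enum 'I_3 | (m <= nat_of_ord i)%N]]>>%VS.

(* structure constants given as a list of ((i, j), [e_i, e_j]) entries;
   unlisted brackets of basis vectors are zero *)
Definition sconst (l : seq (nat * nat * 'rV[K]_3)) (i j : 'I_3) : 'rV[K]_3 :=
  \sum_(t <- l | (t.1.1 == i) && (t.1.2 == j)) t.2.

Definition model_br (l : seq (nat * nat * 'rV[K]_3)) (u v : 'rV[K]_3) : 'rV[K]_3 :=
  \sum_(i < 3) \sum_(j < 3) (u 0 i * v 0 j) *: sconst l i j.

End Models.

Definition iso_model (K : fieldType) (V : vectType K) (L0 L1 : {vspace V})
  (br : V -> V -> V) (m : nat) (l : seq (nat * nat * 'rV[K]_3)) : Prop :=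
  exists f : V -> 'rV[K]_3,
    [/\ (forall (a : K) (x y : V), f (a *: x + y) = a *: f x + f y),
        bijective f,
        (forall x, (x \in L0) = (f x \in model_even K m)),
        (forall x, (x \in L1) = (f x \in model_odd K m))
      & (forall x y, f (br x y) = model_br l (f x) (f y))].

(* Nilpotency forces every operator [ad x] to have 0 as its only eigenvalue.
   Split the classification by superdimension.  (3|0): a non-abelian
   3-dimensional nilpotent Lie algebra has a central element in [L, L], and
   [L, L] is the line spanned by the bracket of two complementary vectors,
   giving the Heisenberg algebra.  (2|1): the even plane is abelian and acts
   trivially on the odd line, so only [e3, e3] in L0 survives.  (1|2): [ad e1]
   is a nilpotent 2x2 matrix on L1 (here algebraic closedness enters); if it
   is nonzero, Jacobi and [x, [x, x]] = 0 kill the symmetric form on L1,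
   giving L^3; if it is zero, L is the symmetric form L1 x L1 -> K e1, whose
   rank 0, 1 or 2 gives L^1, L^4 or L^2 (diagonalisation needs 2 != 0 and
   square roots).  (0|3): the bracket lands in L0 = 0. *)

From HB Require Import structures.
From mathcomp Require Import all_boot all_order all_algebra.
From mathcomp Require Import ring.
Import GRing.Theory.
Local Open Scope ring_scope.
Set Implicit Arguments. Unset Strict Implicit.

Section Coordinates.
Variables (K : fieldType) (V : vectType K) (v0 v1 v2 : V).

Definition comb3 (a b c : K) : V := a *: v0 + b *: v1 + c *: v2.

Lemma comb3Z k a b c : k *: comb3 a b c = comb3 (k * a) (k * b) (k * c).
Proof. by rewrite /comb3 !scalerDr !scalerA. Qed.

Lemma comb3D a b c a' b' c' :
  comb3 a b c + comb3 a' b' c' = comb3 (a + a') (b + b') (c + c').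
Proof. by rewrite /comb3 !scalerDl addrACA [X in X + _]addrACA. Qed.

Lemma comb3N a b c : - comb3 a b c = comb3 (- a) (- b) (- c).
Proof. by rewrite /comb3 !opprD -!scaleNr. Qed.

Lemma comb30 : comb3 0 0 0 = 0.
Proof. by rewrite /comb3 !scale0r !addr0. Qed.

Lemma comb3_v0 : v0 = comb3 1 0 0.
Proof. by rewrite /comb3 !scale0r scale1r !addr0. Qed.

Lemma comb3_v1 : v1 = comb3 0 1 0.
Proof. by rewrite /comb3 !scale0r scale1r add0r addr0. Qed.

Lemma comb3_v2 : v2 = comb3 0 0 1.
Proof. by rewrite /comb3 !scale0r scale1r !add0r. Qed.

Definition det3 (A0 A1 A2 B0 B1 B2 C0 C1 C2 : K) :=
  A0 * (B1 * C2 - B2 * C1) - A1 * (B0 * C2 - B2 * C0) + A2 * (B0 * C1 - B1 * C0).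

Hypothesis hfree : free [:: v0; v1; v2].

Lemma comb3_eq0 a b c : comb3 a b c = 0 -> [/\ a = 0, b = 0 & c = 0].
Proof.
move=> H; have /freeP /= Hk := hfree.
have := Hk (fun i : 'I_3 => [:: a; b; c]`_i).
rewrite !big_ord_recl big_ord0 /= addr0 addrA => /(_ H) Hi.
by split; [apply: (Hi ord0) | apply: (Hi (lift ord0 ord0)) |
  apply: (Hi (lift ord0 (lift ord0 ord0)))].
Qed.

Lemma comb3_inj a b c a' b' c' :
  comb3 a b c = comb3 a' b' c' -> [/\ a = a', b = b' & c = c'].
Proof.
move=> H; have : comb3 (a - a') (b - b') (c - c') = 0.
  by rewrite -comb3D -comb3N H subrr.
by case/comb3_eq0 => /subr0_eq -> /subr0_eq -> /subr0_eq ->.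
Qed.

Lemma free_comb3 A0 A1 A2 B0 B1 B2 C0 C1 C2 :
  det3 A0 A1 A2 B0 B1 B2 C0 C1 C2 != 0 ->
  free [:: comb3 A0 A1 A2; comb3 B0 B1 B2; comb3 C0 C1 C2].
Proof.
move=> hd; apply/freeP => k.
rewrite !big_ord_recl big_ord0 /= addr0 !comb3Z !comb3D => /comb3_eq0[e0 e1 e2].
set k0 := k ord0 in e0 e1 e2 *; set k1 := k (lift ord0 ord0) in e0 e1 e2 *.
set k2 := k (lift ord0 (lift ord0 ord0)) in e0 e1 e2 *.
(* Cramer's rule: each [ki * det] is a combination of the three vanishing rows *)
have h0 : k0 * det3 A0 A1 A2 B0 B1 B2 C0 C1 C2 =
   (B1 * C2 - B2 * C1) * (k0 * A0 + (k1 * B0 + k2 * C0))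
   - (B0 * C2 - B2 * C0) * (k0 * A1 + (k1 * B1 + k2 * C1))
   + (B0 * C1 - B1 * C0) * (k0 * A2 + (k1 * B2 + k2 * C2)) by rewrite /det3; ring.
have h1 : k1 * det3 A0 A1 A2 B0 B1 B2 C0 C1 C2 =
   (A2 * C1 - A1 * C2) * (k0 * A0 + (k1 * B0 + k2 * C0))
   - (A2 * C0 - A0 * C2) * (k0 * A1 + (k1 * B1 + k2 * C1))
   + (A1 * C0 - A0 * C1) * (k0 * A2 + (k1 * B2 + k2 * C2)) by rewrite /det3; ring.
have h2 : k2 * det3 A0 A1 A2 B0 B1 B2 C0 C1 C2 =
   (A1 * B2 - A2 * B1) * (k0 * A0 + (k1 * B0 + k2 * C0))
   - (A0 * B2 - A2 * B0) * (k0 * A1 + (k1 * B1 + k2 * C1))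
   + (A0 * B1 - A1 * B0) * (k0 * A2 + (k1 * B2 + k2 * C2)) by rewrite /det3; ring.
rewrite e0 e1 e2 !mulr0 subrr add0r in h0 h1 h2.
move: h0 h1 h2 => /eqP; rewrite mulf_eq0 (negPf hd) orbF => /eqP h0.
move=> /eqP; rewrite mulf_eq0 (negPf hd) orbF => /eqP h1.
move=> /eqP; rewrite mulf_eq0 (negPf hd) orbF => /eqP h2.
by case=> [[|[|[|//]]] Hi]; [rewrite -h0 | rewrite -h1 | rewrite -h2];
  congr k; apply: val_inj.
Qed.

Lemma comb3_surj : \dim (fullv : {vspace V}) = 3%N ->
  forall x, exists a b c, x = comb3 a b c.
Proof.
move=> hd x.
have hX : basis_of fullv [tuple v0; v1; v2] by rewrite basisEfree hfree subvf hd.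
rewrite (coord_basis hX (memvf x)) !big_ord_recl big_ord0 /= addr0.
by do 3 eexists; rewrite /comb3 addrA.
Qed.

End Coordinates.

Section Bilinear.
Variables (K : fieldType) (V : vectType K) (br : V -> V -> V).
Hypothesis hl : forall (a : K) (x y z : V), br (a *: x + y) z = a *: br x z + br y z.
Hypothesis hr : forall (a : K) (x y z : V), br x (a *: y + z) = a *: br x y + br x z.

Lemma br0l z : br 0 z = 0.
Proof.
have := hl 1 0 0 z; rewrite scaler0 addr0 scale1r.
by rewrite -{1}(addr0 (br 0 z)) => /addrI.
Qed.

Lemma br0r z : br z 0 = 0.
Proof.
have := hr 1 z 0 0; rewrite scaler0 addr0 scale1r.
by rewrite -{1}(addr0 (br z 0)) => /addrI.
Qed.

Lemma brDl x y z : br (x + y) z = br x z + br y z.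
Proof. by have := hl 1 x y z; rewrite !scale1r. Qed.

Lemma brDr x y z : br z (x + y) = br z x + br z y.
Proof. by have := hr 1 z x y; rewrite !scale1r. Qed.

Lemma brZl a x z : br (a *: x) z = a *: br x z.
Proof. by have := hl a x 0 z; rewrite !addr0 br0l addr0. Qed.

Lemma brZr a x z : br z (a *: x) = a *: br z x.
Proof. by have := hr a z x 0; rewrite !addr0 br0r addr0. Qed.

Lemma br_suml I (r : seq I) (P : pred I) (F : I -> V) z :
  br (\sum_(i <- r | P i) F i) z = \sum_(i <- r | P i) br (F i) z.
Proof. exact: (big_morph (fun x => br x z) (fun x y => brDl x y z) (br0l z)). Qed.

Lemma br_sumr I (r : seq I) (P : pred I) (F : I -> V) z :
  br z (\sum_(i <- r | P i) F i) = \sum_(i <- r | P i) br z (F i).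
Proof. exact: (big_morph (fun x => br z x) (fun x y => brDr x y z) (br0r z)). Qed.

Variables (v0 v1 v2 : V).

Lemma br_comb3 a0 a1 a2 b0 b1 b2 :
  br (comb3 v0 v1 v2 a0 a1 a2) (comb3 v0 v1 v2 b0 b1 b2) =
  (a0 * b0) *: br v0 v0 + (a0 * b1) *: br v0 v1 + (a0 * b2) *: br v0 v2 +
  (a1 * b0) *: br v1 v0 + (a1 * b1) *: br v1 v1 + (a1 * b2) *: br v1 v2 +
  (a2 * b0) *: br v2 v0 + (a2 * b1) *: br v2 v1 + (a2 * b2) *: br v2 v2.
Proof. by rewrite /comb3 !brDl !brDr !brZl !brZr !scalerA !addrA. Qed.

Definition structure_constants (s : nat -> nat -> nat -> K) :=
  forall i j, (i < 3)%N -> (j < 3)%N ->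
  br [:: v0; v1; v2]`_i [:: v0; v1; v2]`_j =
  comb3 v0 v1 v2 (s i j 0%N) (s i j 1%N) (s i j 2%N).

Definition bil3 (s : nat -> nat -> nat -> K) (a0 a1 a2 b0 b1 b2 : K) (k : nat) :=
  a0 * b0 * s 0 0 k + a0 * b1 * s 0 1 k + a0 * b2 * s 0 2 k +
  a1 * b0 * s 1 0 k + a1 * b1 * s 1 1 k + a1 * b2 * s 1 2 k +
  a2 * b0 * s 2 0 k + a2 * b1 * s 2 1 k + a2 * b2 * s 2 2 k.

Lemma br_comb3_constants s : structure_constants s -> forall a0 a1 a2 b0 b1 b2,
  br (comb3 v0 v1 v2 a0 a1 a2) (comb3 v0 v1 v2 b0 b1 b2) =
  comb3 v0 v1 v2 (bil3 s a0 a1 a2 b0 b1 b2 0) (bil3 s a0 a1 a2 b0 b1 b2 1)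
    (bil3 s a0 a1 a2 b0 b1 b2 2).
Proof.
move=> Hs a0 a1 a2 b0 b1 b2; rewrite br_comb3.
rewrite (Hs 0%N 0%N) // (Hs 0%N 1%N) // (Hs 0%N 2%N) // (Hs 1%N 0%N) //.
rewrite (Hs 1%N 1%N) // (Hs 1%N 2%N) // (Hs 2%N 0%N) // (Hs 2%N 1%N) //.
by rewrite (Hs 2%N 2%N) // !comb3Z !comb3D /bil3; congr comb3; ring.
Qed.

End Bilinear.

Section LowerCentralSeries.
Variables (K : fieldType) (V : vectType K) (br : V -> V -> V).
Hypothesis hl : forall (a : K) (x y z : V), br (a *: x + y) z = a *: br x z + br y z.
Hypothesis hr : forall (a : K) (x y z : V), br x (a *: y + z) = a *: br x y + br x z.

Lemma br_in_lcs k y x : y \in lcs br k -> br y x \in lcs br k.+1.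
Proof.
move=> Hy /=; rewrite (coord_vbasis Hy) (coord_vbasis (memvf x)).
rewrite (br_suml hl); apply: memv_suml => i _.
rewrite (br_sumr hr); apply: memv_suml => j _.
rewrite (brZl hl) (brZr hr); do 2 apply: memvZ.
by apply/memv_span/allpairs_f; apply: mem_nth; rewrite size_tuple.
Qed.

Lemma lcs_subS k : (lcs br k.+1 <= lcs br k)%VS.
Proof.
elim: k => [|k IH]; first exact: subvf.
apply/span_subvP => v /allpairsP [[x y] [Hx _ ->]] /=.
by apply: br_in_lcs; apply: (subvP IH); apply: vbasis_mem.
Qed.

Lemma lcs_sub m n : (m <= n)%N -> (lcs br n <= lcs br m)%VS.
Proof.
move=> /subnK <-; elim: (n - m)%N => [|d IH]; first exact: subvv.
by rewrite addSn; apply: subv_trans IH; apply: lcs_subS.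
Qed.

Lemma lcs1_sub (U : {vspace V}) : (forall x y, br x y \in U) -> (lcs br 1 <= U)%VS.
Proof. by move=> H; apply/span_subvP => v /allpairsP [[x y] [_ _ ->]]. Qed.

Lemma lcs1_eq0 : lcs br 1 = 0%VS -> forall x y, br x y = 0.
Proof.
move=> H x y; apply/eqP; rewrite -memv0 -H.
by apply: br_in_lcs; apply: memvf.
Qed.

Hypothesis hnil : nilpotent br.

Lemma br_fixed_eq0 y x : br y x = y -> y = 0.
Proof.
move=> H; have Hk k : y \in lcs br k.
  by elim: k => [|k IH]; [apply: memvf | rewrite -H; apply: br_in_lcs].
by case: hnil => k Hk0; move: (Hk k); rewrite Hk0 memv0 => /eqP.
Qed.

Lemma ad_eigenvalue_eq0 x y mu : y != 0 -> br y x = mu *: y -> mu = 0.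
Proof.
move=> y0 H; apply/eqP/negPn/negP => mu0.
have : br y (mu^-1 *: x) = y by rewrite (brZr hr) H scalerA mulVf // scale1r.
by move/br_fixed_eq0/eqP; rewrite (negPf y0).
Qed.

Lemma br_line_eq0 x y : br y x \in <[y]>%VS -> br y x = 0.
Proof.
case/vlineP => mu H; have [->|y0] := eqVneq y 0; first exact: (br0l hl).
by rewrite H (ad_eigenvalue_eq0 y0 H) scale0r.
Qed.

(* the last nonzero term of the lower central series is central *)
Lemma exists_central_lcs1 : lcs br 1 != 0%VS ->
  exists c, [/\ c != 0, c \in lcs br 1 & forall v, br c v = 0].
Proof.
move=> nz1; have exP : exists k, lcs br k == 0%VS.
  by case: hnil => k Hk; exists k; rewrite Hk.
case: (ex_minnP exP) => -[|[|k]] /eqP Hk Hmin.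
- by move: nz1; rewrite -(subv0 (lcs br 1)) -Hk subvf.
- by rewrite Hk eqxx in nz1.
have nzk : lcs br k.+1 != 0%VS.
  by apply/negP => H; move: (Hmin k.+1 H); rewrite ltnn.
exists (vpick (lcs br k.+1)); split; first by rewrite vpick0.
- by apply: (subvP (lcs_sub (ltn0Sn k))); apply: memv_pick.
- by move=> v; apply/eqP; rewrite -memv0 -Hk; apply: br_in_lcs; apply: memv_pick.
Qed.

End LowerCentralSeries.

Section BasisIsomorphism.
Variables (K : fieldType) (V : vectType K) (L0 L1 : {vspace V}) (br : V -> V -> V).
Hypothesis hl : forall (a : K) (x y z : V), br (a *: x + y) z = a *: br x z + br y z.
Hypothesis hr : forall (a : K) (x y z : V), br x (a *: y + z) = a *: br x y + br x z.
Hypothesis hdir : directv (L0 + L1).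
Hypothesis hd : \dim (fullv : {vspace V}) = 3%N.
Variables (w0 w1 w2 : V).
Hypothesis hfree : free [:: w0; w1; w2].
Let X := [tuple w0; w1; w2].

Let hX : basis_of fullv X.
Proof. by rewrite basisEfree hfree subvf hd. Qed.

Let f (x : V) : 'rV[K]_3 := \row_(i < 3) coord X i x.
Let g (u : 'rV[K]_3) : V := \sum_(i < 3) u 0 i *: X`_i.

Let fK : cancel f g.
Proof.
move=> x; rewrite /g /f [RHS](coord_basis hX (memvf x)).
by apply: eq_bigr => i _; rewrite mxE.
Qed.

Let gK : cancel g f.
Proof. by move=> u; apply/rowP => i; rewrite /f /g mxE coord_sum_free. Qed.

Let f_is_linear a x y : f (a *: x + y) = a *: f x + f y.
Proof. by apply/rowP => i; rewrite /f !mxE linearP. Qed.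

Let fZ a x : f (a *: x) = a *: f x.
Proof. by apply/rowP => i; rewrite /f !mxE linearZ. Qed.

Let f_sum I (r : seq I) (P : pred I) (F : I -> V) :
  f (\sum_(i <- r | P i) F i) = \sum_(i <- r | P i) f (F i).
Proof. by apply/rowP => i; rewrite /f mxE linear_sum summxE; apply: eq_bigr => j; rewrite mxE. Qed.

Let g_sum I (r : seq I) (P : pred I) (F : I -> 'rV[K]_3) :
  g (\sum_(i <- r | P i) F i) = \sum_(i <- r | P i) g (F i).
Proof.
rewrite /g exchange_big /=; apply: eq_bigr => i _.
by rewrite summxE scaler_suml.
Qed.

Let gZ a u : g (a *: u) = a *: g u.
Proof. by rewrite /g scaler_sumr; apply: eq_bigr => i _; rewrite mxE scalerA. Qed.

Let g_delta (i : 'I_3) : g (delta_mx 0 i) = X`_i.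
Proof.
rewrite /g (bigD1 i) //= mxE !eqxx scale1r big1 ?addr0 // => j /negPf ji.
by rewrite mxE ji andbF scale0r.
Qed.

Let mem_model (P : pred 'I_3) (U : {vspace V}) :
  (forall i, P i -> X`_i \in U) ->
  (forall x, x \in U -> forall i, ~~ P i -> coord X i x = 0) ->
  forall x, (x \in U) =
    (f x \in <<[seq delta_mx ord0 i | i <- [seq i <- enum 'I_3 | P i]]>>%VS).
Proof.
move=> HP Hc x; apply/idP/idP => Hx.
- rewrite [f x]row_sum_delta; apply: memv_suml => i _.
  case Pi: (P i).
  + by apply/memvZ/memv_span/map_f; rewrite mem_filter Pi mem_enum.
  + by rewrite /f mxE (Hc x Hx i) ?Pi // scale0r mem0v.
- rewrite -(fK x); move: Hx; set Y := [seq delta_mx ord0 i | i <- _] => Hx.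
  rewrite (coord_span (X := in_tuple Y) Hx) g_sum.
  apply: memv_suml => k _; rewrite gZ; apply: memvZ.
  have : (in_tuple Y)`_k \in Y by apply: mem_nth; apply: ltn_ord.
  by case/mapP => i; rewrite mem_filter => /andP[Pi _] ->; rewrite g_delta HP.
Qed.

Let coord_direct (P : pred 'I_3) (U W : {vspace V}) :
  (forall i, P i -> X`_i \in U) -> (forall i, ~~ P i -> X`_i \in W) ->
  (U :&: W = 0)%VS ->
  forall x, x \in U -> forall i, ~~ P i -> coord X i x = 0.
Proof.
move=> HU HW Hcap x Hx i Pi.
set x1 := \sum_(j < 3) (if P j then 0 else coord X j x) *: X`_j.
have x1W : x1 \in W.
  apply: memv_suml => j _; case Pj: (P j); first by rewrite scale0r mem0v.
  by apply/memvZ/HW; rewrite Pj.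
have x1U : x1 \in U.
  have -> : x1 = x - \sum_(j < 3) (if P j then coord X j x else 0) *: X`_j.
    apply/eqP; rewrite eq_sym subr_eq {1}(coord_basis hX (memvf x)) -big_split.
    apply/eqP; apply: eq_bigr => j _.
    by case: (P j); rewrite scale0r /= ?addr0 ?add0r.
  apply: memvB Hx _; apply: memv_suml => j _; case Pj: (P j); last first.
    by rewrite scale0r mem0v.
  by apply/memvZ/HU.
have : x1 \in (U :&: W)%VS by rewrite memv_cap x1U.
rewrite Hcap memv0 => /eqP x10.
have := coord_sum_free (fun j : 'I_3 => if P j then 0 else coord X j x) i hfree.
by rewrite -/x1 x10 linear0 (negPf Pi) => <-.
Qed.

Lemma iso_model_of_basis m l :
  (forall i : 'I_3, (i < m)%N -> X`_i \in L0) ->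
  (forall i : 'I_3, (m <= i)%N -> X`_i \in L1) ->
  (forall i j : 'I_3, br X`_i X`_j = \sum_(k < 3) (sconst l i j) 0 k *: X`_k) ->
  iso_model L0 L1 br m l.
Proof.
move=> H0 H1 Hb; have hcap : (L0 :&: L1 = 0)%VS by apply/directv_addP.
exists f; split.
- exact: f_is_linear.
- by exists g.
- apply: mem_model => [i Hi|]; first exact: H0.
  by apply: (coord_direct (W := L1)) hcap => // i; rewrite -leqNgt; apply: H1.
- apply: mem_model => [i Hi|]; first exact: H1.
  apply: (coord_direct (W := L0)); rewrite 1?capvC // => i.
  by rewrite -ltnNge; apply: H0.
- move=> x y.
  rewrite {1}(coord_basis hX (memvf x)) {1}(coord_basis hX (memvf y)).
  rewrite (br_suml hl) f_sum /model_br; apply: eq_bigr => i _.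
  rewrite (brZl hl) fZ (br_sumr hr) f_sum scaler_sumr; apply: eq_bigr => j _.
  by rewrite (brZr hr) fZ Hb -/(g (sconst l i j)) gK scalerA /f !mxE.
Qed.

End BasisIsomorphism.

Lemma sum_coord_e (K : fieldType) (V : vectType K) (a b c : V) n : (n < 3)%N ->
  \sum_(k < 3) (e K n) 0 k *: [:: a; b; c]`_k = [:: a; b; c]`_n.
Proof.
move=> hn; rewrite !big_ord_recl big_ord0 /e !mxE /= addr0.
rewrite -!(inj_eq val_inj) /= inordK //.
by case: n hn => [|[|[|]]] //= _; rewrite !scale0r !scale1r ?add0r ?addr0.
Qed.

Lemma sum_coord_eN (K : fieldType) (V : vectType K) (a b c : V) n : (n < 3)%N ->
  \sum_(k < 3) (- e K n) 0 k *: [:: a; b; c]`_k = - [:: a; b; c]`_n.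
Proof.
move=> hn; rewrite -(sum_coord_e a b c hn) -sumrN; apply: eq_bigr => k _.
by rewrite mxE scaleNr.
Qed.

Lemma sum_coord0 (K : fieldType) (V : vectType K) (a b c : V) :
  \sum_(k < 3) (0 : 'rV[K]_3) 0 k *: [:: a; b; c]`_k = 0.
Proof. by rewrite big1 // => k _; rewrite mxE scale0r. Qed.

Section Models.
Variables (K : fieldType) (V : vectType K) (L0 L1 : {vspace V}) (br : V -> V -> V).
Hypothesis hl : forall (a : K) (x y z : V), br (a *: x + y) z = a *: br x z + br y z.
Hypothesis hr : forall (a : K) (x y z : V), br x (a *: y + z) = a *: br x y + br x z.
Hypothesis hdir : directv (L0 + L1).
Hypothesis hd : \dim (fullv : {vspace V}) = 3%N.
Variables (m : nat) (w0 w1 w2 : V).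
Hypothesis hfree : free [:: w0; w1; w2].
Hypothesis G0 : w0 \in (if (0 < m)%N then L0 else L1).
Hypothesis G1 : w1 \in (if (1 < m)%N then L0 else L1).
Hypothesis G2 : w2 \in (if (2 < m)%N then L0 else L1).

Let iso_model_of_graded_basis l :
  (forall i j : 'I_3, br [:: w0; w1; w2]`_i [:: w0; w1; w2]`_j =
     \sum_(k < 3) (sconst l i j) 0 k *: [:: w0; w1; w2]`_k) ->
  iso_model L0 L1 br m l.
Proof.
move=> Hb; apply: (iso_model_of_basis hl hr hdir hd hfree) => //.
- by move=> [[|[|[|//]]] Hi] /= Hm; [move: G0 | move: G1 | move: G2]; rewrite Hm.
- by move=> [[|[|[|//]]] Hi] /= Hm; [move: G0 | move: G1 | move: G2];
    rewrite ltnNge Hm.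
Qed.

Local Ltac solve_table := apply: iso_model_of_graded_basis;
  move=> [[|[|[|//]]] Hi] [[|[|[|//]]] Hj];
  rewrite /sconst ?big_cons big_nil /= ?addr0 ?sum_coord0 ?sum_coord_e ?sum_coord_eN.

Lemma iso_abelian :
  br w0 w0 = 0 -> br w0 w1 = 0 -> br w0 w2 = 0 ->
  br w1 w0 = 0 -> br w1 w1 = 0 -> br w1 w2 = 0 ->
  br w2 w0 = 0 -> br w2 w1 = 0 -> br w2 w2 = 0 ->
  iso_model L0 L1 br m [::].
Proof. by move=> *; solve_table. Qed.

Lemma iso_heisenberg :
  br w0 w0 = 0 -> br w0 w1 = w2 -> br w0 w2 = 0 ->
  br w1 w0 = - w2 -> br w1 w1 = 0 -> br w1 w2 = 0 ->
  br w2 w0 = 0 -> br w2 w1 = 0 -> br w2 w2 = 0 ->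
  iso_model L0 L1 br m [:: (0, 1, e K 2); (1, 0, - e K 2)]%N.
Proof. by move=> *; solve_table. Qed.

Lemma iso_pairing :
  br w0 w0 = 0 -> br w0 w1 = 0 -> br w0 w2 = 0 ->
  br w1 w0 = 0 -> br w1 w1 = 0 -> br w1 w2 = w0 ->
  br w2 w0 = 0 -> br w2 w1 = w0 -> br w2 w2 = 0 ->
  iso_model L0 L1 br m [:: (1, 2, e K 0); (2, 1, e K 0)]%N.
Proof. by move=> *; solve_table. Qed.

Lemma iso_square0 :
  br w0 w0 = 0 -> br w0 w1 = 0 -> br w0 w2 = 0 ->
  br w1 w0 = 0 -> br w1 w1 = 0 -> br w1 w2 = 0 ->
  br w2 w0 = 0 -> br w2 w1 = 0 -> br w2 w2 = w0 ->
  iso_model L0 L1 br m [:: (2, 2, e K 0)]%N.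
Proof. by move=> *; solve_table. Qed.

Lemma iso_square1 :
  br w0 w0 = 0 -> br w0 w1 = 0 -> br w0 w2 = 0 ->
  br w1 w0 = 0 -> br w1 w1 = 0 -> br w1 w2 = 0 ->
  br w2 w0 = 0 -> br w2 w1 = 0 -> br w2 w2 = w1 ->
  iso_model L0 L1 br m [:: (2, 2, e K 1)]%N.
Proof. by move=> *; solve_table. Qed.

End Models.

Lemma graded_basis (K : fieldType) (V : vectType K) (L0 L1 : {vspace V}) :
  (L0 + L1)%VS = fullv -> directv (L0 + L1) -> \dim (fullv : {vspace V}) = 3%N ->
  exists v0 v1 v2 : V, free [:: v0; v1; v2] /\
  [\/ L0 = 0%VS /\ L1 = <<[:: v0; v1; v2]>>%VS,
      L0 = <<[:: v0]>>%VS /\ L1 = <<[:: v1; v2]>>%VS,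
      L0 = <<[:: v0; v1]>>%VS /\ L1 = <<[:: v2]>>%VS |
      L0 = <<[:: v0; v1; v2]>>%VS /\ L1 = 0%VS].
Proof.
move=> hsum hdir hd.
have bX := cat_basis hdir (vbasisP L0) (vbasisP L1); rewrite hsum in bX.
have E0 := span_basis (vbasisP L0); have E1 := span_basis (vbasisP L1).
have sz : (size (vbasis L0) + size (vbasis L1) = 3)%N.
  by rewrite !size_tuple -dimv_disjoint_sum ?hsum //; apply/directv_addP.
have fr := basis_free bX.
move: (tval (vbasis L0)) (tval (vbasis L1)) E0 E1 sz fr => s0 s1 E0 E1 sz fr.
case: s0 E0 sz fr => [|a [|b [|c [|x s0]]]] E0;
  case: s1 E1 => [|a' [|b' [|c' [|x' s1]]]] E1 //= sz fr.
- by exists a', b', c'; split => //; apply: Or41; rewrite -E0 -E1 span_nil.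
- by exists a, a', b'; split => //; apply: Or42; rewrite -E0 -E1.
- by exists a, b, a'; split => //; apply: Or43; rewrite -E0 -E1.
- by exists a, b, c; split; rewrite ?cats0 //; apply: Or44; rewrite -E0 -E1 span_nil.
Qed.

Lemma free_extend1 (K : fieldType) (V : vectType K) (c : V) :
  \dim (fullv : {vspace V}) = 3%N -> c != 0 -> exists u w, free [:: c; u; w].
Proof.
move=> hd c0; set C := (<[c]>^C)%VS.
have bC : basis_of fullv ([:: c] ++ vbasis C).
  rewrite -(addv_complf <[c]>); apply: cat_basis; last exact: vbasisP.
  - by apply/directv_addP; apply: capv_compl.
  - exact: seq1_basis.
have : size (vbasis C) = 2%N by rewrite size_tuple dimv_compl hd dim_vline c0.
move: bC; case: (tval (vbasis C)) => [|u [|w [|? ?]]] //= bC _.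
by exists u, w; apply: basis_free bC.
Qed.

Lemma eq_of_subr_mul (R : comNzRingType) (x y k z : R) :
  z = 0 -> x - y = k * z -> x = y.
Proof. by move=> -> /eqP; rewrite mulr0 subr_eq0 => /eqP. Qed.

Lemma eq0_of_subr (R : zmodType) (x y z : R) : x = y -> z = y - x -> z = 0.
Proof. by move=> -> ->; rewrite subrr. Qed.

Lemma nilpotent_2x2 (K : fieldType) (a b c d : K) :
  GRing.closed_field_axiom K ->
  (forall lam x1 x2, lam != 0 -> (a - lam) * x1 + c * x2 = 0 ->
     b * x1 + (d - lam) * x2 = 0 -> x1 = 0 /\ x2 = 0) ->
  a * d - b * c = 0 /\ a + d = 0.
Proof.
move=> hcl eig.
have root0 lam : lam ^+ 2 - (a + d) * lam + (a * d - b * c) = 0 -> lam = 0.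
  move=> chi0; apply/eqP/negPn/negP => l0.
  (* (c, lam - a) and (lam - d, b) solve both eigenvector equations *)
  have [c0 /subr0_eq al] : c = 0 /\ lam - a = 0.
    apply: (eig lam) => //; first by ring.
    by apply: (eq_of_subr_mul (k := -1) chi0); ring.
  have [/subr0_eq dl b0] : lam - d = 0 /\ b = 0.
    apply: (eig lam) => //; last by ring.
    by apply: (eq_of_subr_mul (k := -1) chi0); ring.
  have [] := eig lam 1 0 l0; last by move/eqP; rewrite oner_eq0.
  - by rewrite al subrr; ring.
  - by rewrite b0 -dl subrr; ring.
have [x Hx] := hcl 2%N (fun i => if i == 0%N then - (a * d - b * c) else a + d) isT.
rewrite !big_ord_recl big_ord0 /= addr0 expr0 expr1 mulr1 in Hx.
have x0 : x = 0 by apply: root0; rewrite Hx; ring.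
have det0 : a * d - b * c = 0.
  by move: Hx; rewrite x0 expr0n /= mulr0 addr0 => /eqP; rewrite eq_sym oppr_eq0 => /eqP.
by split=> //; apply: root0; rewrite det0; ring.
Qed.

(* [v0, v1] = a v1 + b v2, [v0, v2] = c v1 + d v2 and the bracket of odd basis
   vectors is the symmetric form [[al, be], [be, ga]] times v0 *)
Definition mixed_constants (K : fieldType) (a b c d al be ga : K) (i j k : nat) : K :=
  match i, j, k with
  | 0%N, 1%N, 1%N => a | 0%N, 1%N, 2%N => b | 0%N, 2%N, 1%N => c | 0%N, 2%N, 2%N => d
  | 1%N, 0%N, 1%N => - a | 1%N, 0%N, 2%N => - b
  | 2%N, 0%N, 1%N => - c | 2%N, 0%N, 2%N => - d
  | 1%N, 1%N, 0%N => al | 1%N, 2%N, 0%N => be | 2%N, 1%N, 0%N => be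
  | 2%N, 2%N, 0%N => ga
  | _, _, _ => 0
  end.

Section Superalgebra.
Variables (K : fieldType) (V : vectType K) (L0 L1 : {vspace V}) (br : V -> V -> V).
Hypothesis hL : is_lie_superalgebra L0 L1 br.
Hypothesis hd : \dim (fullv : {vspace V}) = 3%N.
Hypothesis hnil : nilpotent br.
Hypothesis h2 : (2%:R : K) != 0.

Let hsum : (L0 + L1)%VS = fullv. Proof. by case: hL => [[]]. Qed.
Let hdir : directv (L0 + L1). Proof. by case: hL => [[]]. Qed.
Let hl : forall (a : K) (x y z : V), br (a *: x + y) z = a *: br x z + br y z.
Proof. by case: hL => _ []. Qed.
Let hr : forall (a : K) (x y z : V), br x (a *: y + z) = a *: br x y + br x z.
Proof. by case: hL => _ [_ []]. Qed.
Let hgr : forall (a b : bool) (x y : V), homog L0 L1 a x -> homog L0 L1 b y ->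
  homog L0 L1 (a (+) b) (br x y).
Proof. by case: hL => _ [_ [_ []]]. Qed.
Let hskew : forall (a b : bool) (x y : V), homog L0 L1 a x -> homog L0 L1 b y ->
  br x y = - ((-1) ^+ (a && b) *: br y x).
Proof. by case: hL => _ [_ [_ [_ []]]]. Qed.

Lemma br_even_even x y : x \in L0 -> y \in L0 -> br x y \in L0.
Proof. by move=> hx hy; apply: (hgr (a := false) (b := false)). Qed.
Lemma br_even_odd x y : x \in L0 -> y \in L1 -> br x y \in L1.
Proof. by move=> hx hy; apply: (hgr (a := false) (b := true)). Qed.
Lemma br_odd_odd x y : x \in L1 -> y \in L1 -> br x y \in L0.
Proof. by move=> hx hy; apply: (hgr (a := true) (b := true)). Qed.

Lemma br_odd_sym x y : x \in L1 -> y \in L1 -> br x y = br y x.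
Proof.
by move=> hx hy; rewrite (hskew (a := true) (b := true)) // expr1 scaleN1r opprK.
Qed.

Lemma br_even_skew x y : x \in L0 -> br y x = - br x y.
Proof.
move=> hx; have : y \in (L0 + L1)%VS by rewrite hsum memvf.
case/memv_addP => y0 hy0 [y1 hy1 ->]; rewrite (brDl hl) (brDr hr) opprD.
rewrite (hskew (a := false) (b := false) hy0 hx).
by rewrite (hskew (a := true) (b := false) hy1 hx) !expr0 !scale1r.
Qed.

Lemma br_even_self x : x \in L0 -> br x x = 0.
Proof.
move=> hx; apply/eqP; have := br_even_skew x hx; move/eqP.
rewrite -subr_eq0 opprK -mulr2n -scaler_nat scaler_eq0.
by rewrite (negPf h2).
Qed.

Lemma iso_sdim03 (v0 v1 v2 : V) : free [:: v0; v1; v2] -> L0 = 0%VS ->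
  iso_model L0 L1 br 0 [::].
Proof.
move=> hf HL0; have E x : x \in L1 by rewrite -[L1]add0v -HL0 hsum memvf.
have Z x y : br x y = 0.
  by apply/eqP; rewrite -memv0 -HL0; apply: br_odd_odd.
by apply: (iso_abelian hl hr hdir hd hf); rewrite ?E ?Z.
Qed.

Lemma iso_sdim30 (v0 v1 v2 : V) : free [:: v0; v1; v2] -> L1 = 0%VS ->
  iso_model L0 L1 br 3 [::] \/
  iso_model L0 L1 br 3 [:: (0, 1, e K 2); (1, 0, - e K 2)]%N.
Proof.
move=> hf HL1; have E x : x \in L0 by rewrite -[L0]addv0 -HL1 hsum memvf.
have [H0|nz1] := eqVneq (lcs br 1) 0%VS.
  by left; apply: (iso_abelian hl hr hdir hd hf); rewrite ?E ?(lcs1_eq0 hl hr H0).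
right; have [c [c0 c1 cz]] := exists_central_lcs1 hl hr hnil nz1.
have zc v : br v c = 0 by rewrite br_even_skew ?E // cz oppr0.
have [u [w hf']] := free_extend1 hd c0.
have line x y : br x y \in <[br u w]>%VS.
  have [k0 [k1 [k2 ->]]] := comb3_surj hf' hd x.
  have [l0 [l1 [l2 ->]]] := comb3_surj hf' hd y.
  rewrite (br_comb3 hl hr) !cz !zc !br_even_self ?E // (br_even_skew w (E u)).
  by rewrite !scaler0 !add0r !addr0 memvD // memvZ // ?memvN memv_line.
have /vlineP [lam clam] : c \in <[br u w]>%VS by apply: (subvP (lcs1_sub line)).
have lam0 : lam != 0 by apply: contraNneq c0 => lam0; rewrite clam lam0 scale0r.
have hE : br u w = lam^-1 *: c by rewrite clam scalerA mulVf // scale1r.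
have hz v : br (br u w) v = 0 by rewrite hE (brZl hl) cz scaler0.
have zh v : br v (br u w) = 0 by rewrite hE (brZr hr) zc scaler0.
apply: (iso_heisenberg (m := 3) (w0 := u) (w1 := w) (w2 := br u w) hl hr hdir hd);
  rewrite /= ?E ?br_even_self ?hz ?zh //; last by rewrite br_even_skew ?E.
have -> : [:: u; w; br u w] =
    [:: comb3 c u w 0 1 0; comb3 c u w 0 0 1; comb3 c u w lam^-1 0 0].
  by rewrite hE /comb3 !scale0r !scale1r !add0r !addr0.
apply: free_comb3 => //.
by rewrite /det3 !(mul0r, mulr0, mul1r, mulr1, subr0, sub0r, addr0, add0r) opprK invr_eq0.
Qed.

Lemma br_plane_eq0 x y : br x x = 0 -> br y y = 0 -> br y x = - br x y ->
  br x y \in <<[:: x; y]>>%VS -> br x y = 0.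
Proof.
move=> hxx hyy hyx; rewrite span_cons span_seq1.
case/memv_addP => _ /vlineP [al ->] [_ /vlineP [be ->] Hxy].
have [//|nz] := eqVneq (br x y) 0.
have al0 : al = 0.
  apply: (ad_eigenvalue_eq0 hl hr hnil (x := y) nz).
  by rewrite {1}Hxy (brDl hl) !(brZl hl) hyy scaler0 addr0.
have be0 : - be = 0.
  apply: (ad_eigenvalue_eq0 hl hr hnil (x := x) nz).
  by rewrite {1}Hxy (brDl hl) !(brZl hl) hxx hyx scaler0 add0r scalerN scaleNr.
by move/eqP: be0; rewrite oppr_eq0 => /eqP be0; rewrite Hxy al0 be0 !scale0r addr0.
Qed.

Section SdimTwoOne.
Variables (v0 v1 v2 : V).
Hypothesis hf : free [:: v0; v1; v2].
Hypotheses (HL0 : L0 = <<[:: v0; v1]>>%VS) (HL1 : L1 = <<[:: v2]>>%VS).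

Let e0 : v0 \in L0. Proof. by rewrite HL0 memv_span // inE eqxx. Qed.
Let e1 : v1 \in L0. Proof. by rewrite HL0 memv_span // !inE eqxx orbT. Qed.
Let o2 : v2 \in L1. Proof. by rewrite HL1 memv_span // inE eqxx. Qed.

Lemma sdim21_even_central x y : x \in L0 -> br x y = 0.
Proof.
have odd_line z : z \in L0 -> br z v2 = 0.
  move=> hz; have : br v2 z = 0.
    apply: (br_line_eq0 hl hr hnil).
    by rewrite -span_seq1 -HL1 br_even_skew // memvN br_even_odd.
  by rewrite br_even_skew // => /eqP; rewrite oppr_eq0 => /eqP.
have k01 : br v0 v1 = 0.
  apply: br_plane_eq0; rewrite ?br_even_self //; first by rewrite br_even_skew.
  by rewrite -HL0 br_even_even.
have [b0 [b1 [b2 ->]]] := comb3_surj hf hd y.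
rewrite HL0 span_cons span_seq1 => /memv_addP [_ /vlineP [a0 ->] [_ /vlineP [a1 ->] ->]].
rewrite (_ : a0 *: v0 + a1 *: v1 = comb3 v0 v1 v2 a0 a1 0); last first.
  by rewrite /comb3 scale0r addr0.
rewrite (br_comb3 hl hr) (br_even_self e0) (br_even_self e1) (br_even_skew v1 e0) k01.
by rewrite !mul0r !scale0r !odd_line // oppr0 !scaler0 !addr0.
Qed.

Lemma iso_sdim21 :
  iso_model L0 L1 br 2 [::] \/ iso_model L0 L1 br 2 [:: (2, 2, e K 1)]%N.
Proof.
have Zl := sdim21_even_central.
have Zr x y : x \in L0 -> br y x = 0 by move=> hx; rewrite br_even_skew // Zl ?oppr0.
have [t0|tn] := eqVneq (br v2 v2) 0.
  by left; apply: (iso_abelian hl hr hdir hd hf) => //=; by [rewrite Zl | rewrite Zr].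
right; have tL0 : br v2 v2 \in L0 by apply: br_odd_odd.
have := tL0; rewrite {1}HL0 span_cons span_seq1.
case/memv_addP => _ /vlineP [g0 ->] [_ /vlineP [g1 ->] tE].
have tE3 : br v2 v2 = comb3 v0 v1 v2 g0 g1 0 by rewrite tE /comb3 scale0r addr0.
(* [br v2 v2] spans L0 together with v0 if g0 = 0, and with v1 otherwise *)
have [g00|g0n] := eqVneq g0 0.
  apply: (iso_square1 (m := 2) (w0 := v0) (w1 := br v2 v2) (w2 := v2) hl hr hdir hd) => //=;
    try by [rewrite Zl | rewrite Zr].
  have -> : [:: v0; br v2 v2; v2] = [:: comb3 v0 v1 v2 1 0 0;
      comb3 v0 v1 v2 g0 g1 0; comb3 v0 v1 v2 0 0 1] by rewrite -comb3_v0 -comb3_v2 tE3.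
  apply: free_comb3 => //.
  rewrite /det3 g00 !(mul0r, mulr0, mul1r, mulr1, subr0, sub0r, addr0, add0r).
  by apply: contraNneq tn => g10; rewrite tE g00 g10 !scale0r addr0.
apply: (iso_square1 (m := 2) (w0 := v1) (w1 := br v2 v2) (w2 := v2) hl hr hdir hd) => //=;
  try by [rewrite Zl | rewrite Zr].
have -> : [:: v1; br v2 v2; v2] = [:: comb3 v0 v1 v2 0 1 0;
    comb3 v0 v1 v2 g0 g1 0; comb3 v0 v1 v2 0 0 1] by rewrite -comb3_v1 -comb3_v2 tE3.
apply: free_comb3 => //.
by rewrite /det3 !(mul0r, mulr0, mul1r, mulr1, subr0, sub0r, addr0, add0r) oppr_eq0.
Qed.

End SdimTwoOne.

Let hjac : forall (a b c : bool) (x y z : V), homog L0 L1 a x -> homog L0 L1 b y ->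
  homog L0 L1 c z -> br x (br y z) = br (br x y) z + (-1) ^+ (a && b) *: br y (br x z).
Proof. by case: hL => _ [_ [_ [_ [_ []]]]]. Qed.
Let hcube : forall x : V, x \in L1 -> br x (br x x) = 0.
Proof. by case: hL => _ [_ [_ [_ [_ []]]]]. Qed.

Section SdimOneTwo.
Hypothesis hcl : GRing.closed_field_axiom K.
Variables (v0 v1 v2 : V).
Hypothesis hf : free [:: v0; v1; v2].
Hypotheses (HL0 : L0 = <<[:: v0]>>%VS) (HL1 : L1 = <<[:: v1; v2]>>%VS).

Let even_comb3 k : comb3 v0 v1 v2 k 0 0 \in L0.
Proof. by rewrite HL0 /comb3 !scale0r !addr0 memvZ // memv_span // inE eqxx. Qed.
Let odd_comb3 k1 k2 : comb3 v0 v1 v2 0 k1 k2 \in L1.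
Proof.
by rewrite HL1 /comb3 scale0r add0r memvD // memvZ // memv_span // !inE eqxx ?orbT.
Qed.

Lemma sdim12_constants : exists a b c d al be ga : K,
  structure_constants br v0 v1 v2 (mixed_constants a b c d al be ga).
Proof.
have even_coord x : x \in L0 -> exists k, x = comb3 v0 v1 v2 k 0 0.
  by rewrite HL0 span_seq1 => /vlineP [k ->]; exists k; rewrite /comb3 !scale0r !addr0.
have odd_coord x : x \in L1 -> exists k1 k2, x = comb3 v0 v1 v2 0 k1 k2.
  rewrite HL1 span_cons span_seq1.
  case/memv_addP => _ /vlineP [k1 ->] [_ /vlineP [k2 ->] ->].
  by exists k1, k2; rewrite /comb3 scale0r add0r.
have e0 : v0 \in L0 by rewrite (comb3_v0 v0 v1 v2).
have o1 : v1 \in L1 by rewrite (comb3_v1 v0 v1 v2).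
have o2 : v2 \in L1 by rewrite (comb3_v2 v0 v1 v2).
have [a [b H01]] := odd_coord _ (br_even_odd e0 o1).
have [c [d H02]] := odd_coord _ (br_even_odd e0 o2).
have [al H11] := even_coord _ (br_odd_odd o1 o1).
have [be H12] := even_coord _ (br_odd_odd o1 o2).
have [ga H22] := even_coord _ (br_odd_odd o2 o2).
have H00 : br v0 v0 = comb3 v0 v1 v2 0 0 0 by rewrite comb30 br_even_self.
have H10 : br v1 v0 = comb3 v0 v1 v2 0 (- a) (- b).
  by rewrite br_even_skew // H01 comb3N oppr0.
have H20 : br v2 v0 = comb3 v0 v1 v2 0 (- c) (- d).
  by rewrite br_even_skew // H02 comb3N oppr0.
have H21 : br v2 v1 = comb3 v0 v1 v2 be 0 0 by rewrite br_odd_sym.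
by exists a, b, c, d, al, be, ga => -[|[|[|i]]] [|[|[|j]]].
Qed.

Local Ltac bracket_by_constants Hs :=
  rewrite ?(br_comb3_constants hl hr Hs) ?comb3N -?(comb30 v0 v1 v2);
  congr comb3; rewrite /bil3 /=; field; by repeat (apply/andP; split).

Local Ltac free_by_det D :=
  apply: (free_comb3 hf); rewrite (_ : det3 _ _ _ _ _ _ _ _ _ = D);
  last by rewrite /det3; ring.

Lemma iso_odd_form_degenerate al be ga :
  structure_constants br v0 v1 v2 (mixed_constants 0 0 0 0 al be ga) ->
  al * ga = be ^+ 2 ->
  iso_model L0 L1 br 1 [::] \/ iso_model L0 L1 br 1 [:: (2, 2, e K 0)]%N.
Proof.
move=> Hs deg; have [al0|aln] := eqVneq al 0.
  have be0 : be = 0.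
    by apply/eqP; rewrite -sqrf_eq0 -deg al0 mul0r.
  subst al be; have [ga0|gan] := eqVneq ga 0.
    subst ga; left.
    apply: (iso_abelian (m := 1) (w0 := comb3 v0 v1 v2 1 0 0)
      (w1 := comb3 v0 v1 v2 0 1 0) (w2 := comb3 v0 v1 v2 0 0 1) hl hr hdir hd) => //=;
      try bracket_by_constants Hs.
    by free_by_det (1 : K); rewrite oner_eq0.
  right.
  apply: (iso_square0 (m := 1) (w0 := comb3 v0 v1 v2 ga 0 0)
    (w1 := comb3 v0 v1 v2 0 1 0) (w2 := comb3 v0 v1 v2 0 0 1) hl hr hdir hd) => //=;
    try bracket_by_constants Hs.
  by free_by_det ga.
(* v1 is not isotropic and be v1 - al v2 spans the radical *)
have gE : ga = be ^+ 2 / al.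
  have deg0 : al * ga - be ^+ 2 = 0 by rewrite deg subrr.
  by apply: (eq_of_subr_mul (k := al^-1) deg0); field.
subst ga; right.
apply: (iso_square0 (m := 1) (w0 := comb3 v0 v1 v2 al 0 0)
  (w1 := comb3 v0 v1 v2 0 be (- al)) (w2 := comb3 v0 v1 v2 0 1 0) hl hr hdir hd) => //=;
  try bracket_by_constants Hs.
by free_by_det (al ^+ 2); rewrite sqrf_eq0.
Qed.

Lemma iso_odd_form_nondegenerate al be ga :
  structure_constants br v0 v1 v2 (mixed_constants 0 0 0 0 al be ga) ->
  al * ga != be ^+ 2 ->
  iso_model L0 L1 br 1 [:: (1, 2, e K 0); (2, 1, e K 0)]%N.
Proof.
move=> Hs ndeg; have [al0|aln] := eqVneq al 0.
  subst al; have ben : be != 0.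
    by apply: contraNneq ndeg => ->; rewrite mul0r expr0n.
  apply: (iso_pairing (m := 1) (w0 := comb3 v0 v1 v2 be 0 0)
    (w1 := comb3 v0 v1 v2 0 1 0) (w2 := comb3 v0 v1 v2 0 (- ga / (2%:R * be)) 1)
    hl hr hdir hd) => //=; try bracket_by_constants Hs.
  by free_by_det be.
(* x v1 + v2 is isotropic for a root x of al X^2 + 2 be X + ga *)
have [x Hx] := @hcl 2%N (fun i => if i == 0%N then - ga / al else - (2%:R * be) / al) isT.
rewrite !big_ord_recl big_ord0 /= addr0 expr0 expr1 mulr1 in Hx.
have gE : ga = - (al * x ^+ 2 + 2%:R * be * x).
  move/eqP: Hx; rewrite -subr_eq0 => /eqP Hx.
  by apply: (eq_of_subr_mul (k := al) Hx); field.
subst ga; have mun : x * al + be != 0.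
  apply: contraNneq ndeg => mu0.
  have -> : be = - (x * al) by apply/eqP; rewrite -subr_eq0 opprK addrC mu0.
  by apply/eqP; ring.
apply: (iso_pairing (m := 1) (w0 := comb3 v0 v1 v2 (x * al + be) 0 0)
  (w1 := comb3 v0 v1 v2 0 x 1)
  (w2 := comb3 v0 v1 v2 0 (1 + (- al / (2%:R * (x * al + be))) * x)
           (- al / (2%:R * (x * al + be)))) hl hr hdir hd) => //=;
  try bracket_by_constants Hs.
by free_by_det (- (x * al + be)); rewrite oppr_eq0.
Qed.

Section Constants.
Variables (a b c d al be ga : K).
Hypothesis Hs : structure_constants br v0 v1 v2 (mixed_constants a b c d al be ga).

Lemma sdim12_jacobi :
  [/\ a * al + b * be = 0, a * be + b * ga + c * al + d * be = 0 & c * be + d * ga = 0].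
Proof.
have J x1 x2 y1 y2 := hjac (a := false) (b := true) (c := true)
  (even_comb3 1) (odd_comb3 x1 x2) (odd_comb3 y1 y2).
split.
- apply: (mulfI h2); rewrite mulr0; have := J 1 0 1 0.
  rewrite expr0 scale1r !(br_comb3_constants hl hr Hs) comb3D => /(comb3_inj hf) [j _ _].
  by apply: (eq0_of_subr j); rewrite /bil3 /=; ring.
- have := J 1 0 0 1.
  rewrite expr0 scale1r !(br_comb3_constants hl hr Hs) comb3D => /(comb3_inj hf) [j _ _].
  by apply: (eq0_of_subr j); rewrite /bil3 /=; ring.
- apply: (mulfI h2); rewrite mulr0; have := J 0 1 0 1.
  rewrite expr0 scale1r !(br_comb3_constants hl hr Hs) comb3D => /(comb3_inj hf) [j _ _].
  by apply: (eq0_of_subr j); rewrite /bil3 /=; ring.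
Qed.

Lemma sdim12_cube : [/\ al * a = 0, al * b = 0, ga * c = 0 & ga * d = 0].
Proof.
have C x1 x2 := hcube (odd_comb3 x1 x2).
move: (C 1 0) (C 0 1); rewrite !(br_comb3_constants hl hr Hs) -(comb30 v0 v1 v2).
move=> /(comb3_inj hf) [_ j1 j2] /(comb3_inj hf) [_ j3 j4].
by split; [apply: (eq0_of_subr j1) | apply: (eq0_of_subr j2) |
  apply: (eq0_of_subr j3) | apply: (eq0_of_subr j4)]; rewrite /bil3 /=; ring.
Qed.

Lemma sdim12_ad_nilpotent : a * d - b * c = 0 /\ a + d = 0.
Proof.
apply: nilpotent_2x2 hcl _ => lam x1 x2 l0 E1 E2.
have H : br (comb3 v0 v1 v2 0 x1 x2) v0 = (- lam) *: comb3 v0 v1 v2 0 x1 x2.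
  rewrite [v0 in br _ v0](comb3_v0 v0 v1 v2) (br_comb3_constants hl hr Hs) comb3Z.
  congr comb3; rewrite /bil3 /=; first by ring.
  - by apply: (eq_of_subr_mul (k := -1) E1); ring.
  - by apply: (eq_of_subr_mul (k := -1) E2); ring.
have [/(comb3_eq0 hf) [_ -> ->] // | nz] := eqVneq (comb3 v0 v1 v2 0 x1 x2) 0.
by have /eqP := ad_eigenvalue_eq0 hl hr hnil nz H; rewrite oppr_eq0 (negPf l0).
Qed.

End Constants.

Lemma iso_sdim12_ad_nonzero a b c d al be ga :
  structure_constants br v0 v1 v2 (mixed_constants a b c d al be ga) ->
  (b != 0) || (c != 0) ->
  iso_model L0 L1 br 1 [:: (0, 1, e K 2); (1, 0, - e K 2)]%N.
Proof.
move=> Hs bc; have [J11 J12 J22] := sdim12_jacobi Hs.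
have [_ X1b X2c _] := sdim12_cube Hs.
have [det0 tr0] := sdim12_ad_nilpotent Hs.
have dE : d = - a by apply/eqP; rewrite -(subr_eq0 d) opprK addrC tr0.
subst d; have [b0|bn] := eqVneq b 0.
  subst b; have cn : c != 0 by rewrite eqxx in bc.
  have a0 : a = 0.
    by apply/eqP; rewrite -sqrf_eq0 -oppr_eq0; apply/eqP; rewrite -[RHS]det0; ring.
  subst a; have ga0 : ga = 0 by apply: (mulIf cn); rewrite mul0r X2c.
  subst ga; have be0 : be = 0 by apply: (mulIf cn); rewrite mul0r -[RHS]J22; ring.
  subst be; have al0 : al = 0 by apply: (mulIf cn); rewrite mul0r -[RHS]J12; ring.
  subst al.
  apply: (iso_heisenberg (m := 1) (w0 := comb3 v0 v1 v2 1 0 0)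
    (w1 := comb3 v0 v1 v2 0 0 1) (w2 := comb3 v0 v1 v2 0 c 0) hl hr hdir hd) => //=;
    try bracket_by_constants Hs.
  by free_by_det (- c); rewrite oppr_eq0.
have al0 : al = 0 by apply: (mulIf bn); rewrite mul0r X1b.
subst al; have be0 : be = 0 by apply: (mulIf bn); rewrite mul0r -[RHS]J11; ring.
subst be; have ga0 : ga = 0 by apply: (mulIf bn); rewrite mul0r -[RHS]J12; ring.
subst ga; have cE : c = - a ^+ 2 / b.
  by apply: (eq_of_subr_mul (k := - b^-1) det0); field.
subst c.
apply: (iso_heisenberg (m := 1) (w0 := comb3 v0 v1 v2 1 0 0)
  (w1 := comb3 v0 v1 v2 0 1 0) (w2 := comb3 v0 v1 v2 0 a b) hl hr hdir hd) => //=;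
  try bracket_by_constants Hs.
by free_by_det b.
Qed.

Lemma iso_sdim12_ad_zero a b c d al be ga :
  structure_constants br v0 v1 v2 (mixed_constants a b c d al be ga) ->
  b = 0 -> c = 0 ->
  [\/ iso_model L0 L1 br 1 [::],
       iso_model L0 L1 br 1 [:: (1, 2, e K 0); (2, 1, e K 0)]%N |
       iso_model L0 L1 br 1 [:: (2, 2, e K 0)]%N].
Proof.
move=> Hs b0 c0; have [det0 tr0] := sdim12_ad_nilpotent Hs.
have dE : d = - a by apply/eqP; rewrite -(subr_eq0 d) opprK addrC tr0.
subst b c d; have a0 : a = 0.
  by apply/eqP; rewrite -sqrf_eq0 -oppr_eq0; apply/eqP; rewrite -[RHS]det0; ring.
subst a; rewrite oppr0 in Hs.
have [deg|ndeg] := eqVneq (al * ga) (be ^+ 2).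
  by case: (iso_odd_form_degenerate Hs deg) => ?; [apply: Or31 | apply: Or33].
by apply: Or32; apply: iso_odd_form_nondegenerate Hs ndeg.
Qed.

Lemma iso_sdim12 :
  [\/ iso_model L0 L1 br 1 [::],
       iso_model L0 L1 br 1 [:: (1, 2, e K 0); (2, 1, e K 0)]%N,
       iso_model L0 L1 br 1 [:: (0, 1, e K 2); (1, 0, - e K 2)]%N |
       iso_model L0 L1 br 1 [:: (2, 2, e K 0)]%N].
Proof.
have [a [b [c [d [al [be [ga Hs]]]]]]] := sdim12_constants.
have [b0|bn] := eqVneq b 0; last first.
  by apply: Or43; apply: (iso_sdim12_ad_nonzero Hs); rewrite bn.
have [c0|cn] := eqVneq c 0; last first.
  by apply: Or43; apply: (iso_sdim12_ad_nonzero Hs); rewrite cn orbT.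
by case: (iso_sdim12_ad_zero Hs b0 c0) => ?; [apply: Or41 | apply: Or42 | apply: Or44].
Qed.

End SdimOneTwo.

End Superalgebra.

Unset Implicit Arguments.

Theorem mainTheorem5 (K : closedFieldType) (p : nat)
  (hp : prime p) (hchar : p \in [pchar K]) (hp3 : (3 <= p)%N)
  (V : vectType K) (L0 L1 : {vspace V}) (br : V -> V -> V)
  (hL : is_lie_superalgebra L0 L1 br)
  (hdim : \dim (fullv : {vspace V}) = 3%N)
  (hnil : nilpotent br) :
  (* sdim (0|3) *)
  iso_model L0 L1 br 0 [::]
  (* sdim (1|2), basis e1 | e2, e3 *)
  \/ iso_model L0 L1 br 1 [::]
  \/ iso_model L0 L1 br 1 [:: (1, 2, e K 0); (2, 1, e K 0)]%N
  \/ iso_model L0 L1 br 1 [:: (0, 1, e K 2); (1, 0, - e K 2)]%N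
  \/ iso_model L0 L1 br 1 [:: (2, 2, e K 0)]%N
  (* sdim (2|1), basis e1, e2 | e3 *)
  \/ iso_model L0 L1 br 2 [::]
  \/ iso_model L0 L1 br 2 [:: (2, 2, e K 1)]%N
  (* sdim (3|0), basis e1, e2, e3 *)
  \/ iso_model L0 L1 br 3 [::]
  \/ iso_model L0 L1 br 3 [:: (0, 1, e K 2); (1, 0, - e K 2)]%N.
Proof.
have [[hsum hdir] _] := hL.
have h2 : (2%:R : K) != 0.
  rewrite -(dvdn_pcharf hchar); apply/negP => /(dvdn_leq (isT : (0 < 2)%N)) hp2.
  by have := leq_trans hp3 hp2.
have [v0 [v1 [v2 [hf []]]]] := graded_basis hsum hdir hdim.
- by case=> HL0 _; left; apply: iso_sdim03 hL hdim _ _ _ hf HL0.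
- case=> HL0 HL1; have := iso_sdim12 hL hdim hnil h2 (@solve_monicpoly K) hf HL0 HL1.
  by case=> H; [do 1 right; left | do 2 right; left | do 3 right; left | do 4 right; left].
- case=> HL0 HL1; have := iso_sdim21 hL hdim hnil h2 hf HL0 HL1.
  by case=> H; [do 5 right; left | do 6 right; left].
- case=> _ HL1; have := iso_sdim30 hL hdim hnil h2 hf HL1.
  by case=> H; [do 7 right; left | do 8 right].
Qed.
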